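(* Let $s:\mathbb C_+\to\mathbb C_+$ be continuous and set $R(z)=s(z)^2+s(z)z+1$. For $E\in\mathbb R$, $\eta_0>0$ and $\eta_1\ge3\vee\eta_0$, suppose that there is a nonincreasing continuous function $r:[\eta_0,\eta_1]\to[0,1]$ such that $|R(E+\mathrm i\eta)|\le(1+|E+\mathrm i\eta|)\,r(\eta)$ for all $\eta\in[\eta_0,\eta_1]$. Then for all $z=E+\mathrm i\eta$ with $\eta\in[\eta_0,\eta_1]$ we have \[|s(z)-m(z)|=O\big(F_z(r(\eta))\big).\]
   Context: $\mathbb C_+$ is the open upper half-plane. $m(z)=\frac{-z+\sqrt{z^2-4}}2$ with the branch chosen so that $m(z)\in\mathbb C_+$ for $z\in\mathbb C_+$ (equivalently, branch cut $[-2,2]$ and $\sqrt{z^2-4}\sim z$ as $|z|\to\infty$). For $r\in[0,1]$, $F_z(r)=[(1+|z^2-4|^{-1/2})r]\wedge\sqrt r$. $O(\cdot)$ denotes a bound with an absolute constant. *)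

From Stdlib Require Import Reals.
From Coquelicot Require Export Coquelicot.
Open Scope R_scope.

(* Principal square root on C: Re >= 0, branch cut on (-oo,0],
   with values on the cut taken with Im >= 0. *)
Definition Csqrt_p (w : C) : C :=
  (sqrt ((Cmod w + Re w) / 2),
   (if Rlt_dec (Im w) 0 then -1 else 1) * sqrt ((Cmod w - Re w) / 2)).

(* sqrt(z^2-4) with branch cut [-2,2] and sqrt(z^2-4) ~ z at infinity,
   realised as sqrt_p(z-2) * sqrt_p(z+2). *)
Definition sqrt_z2m4 (z : C) : C :=
  Cmult (Csqrt_p (Cminus z (RtoC 2))) (Csqrt_p (Cplus z (RtoC 2))).

(* Stieltjes transform of the semicircle law. *)
Definition m_sc (z : C) : C :=
  Cdiv (Cplus (Copp z) (sqrt_z2m4 z)) (RtoC 2).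

Definition F_z (z : C) (r : R) : R :=
  Rmin ((1 + / sqrt (Cmod (Cminus (Cmult z z) (RtoC 4)))) * r) (sqrt r).

From Stdlib Require Import Reals Lra Psatz.
From Coquelicot Require Import Coquelicot.
Open Scope R_scope.

(* Write R(u) = u^2 + z u + 1 = (u - m)(u - m') with m = m_sc z and m' the other root,
   and let a = |s - m|, b = |s - m'|.  Then a b = |R(s)| <= (1 + |z|) r while
   a + b >= |m - m'| = sqrt |z^2 - 4|, so when a <= b we get a = O(F_z(r)) directly.
   At the top of the range b > Im z >= 3 forces a <= b.  Hence if a > b at height eta,
   by continuity a = b at some higher ts, where this forces |z| = O(1) and
   |z^2 - 4| = O(r(ts)); since |z| and |z^2 - 4| grow with the height while r decreases,
   these bounds also hold at eta, and they give a = O(F_z(r)) in the remaining case. *)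

Lemma Csqrt_p_sqr (w : C) : Cmult (Csqrt_p w) (Csqrt_p w) = w.
Proof.
  destruct w as [c t]. unfold Csqrt_p, Cmult, Re, Im; simpl.
  set (S := Cmod (c, t)).
  assert (HS2 : S * S = c ^ 2 + t ^ 2)
    by (transitivity (S ^ 2); [ring | exact (Cmod2_alt (c, t))]).
  assert (HcS : Rabs c <= S) by exact (re_le_Cmod (c, t)).
  apply Rabs_le_between in HcS.
  assert (Hx : sqrt ((S + c) / 2) * sqrt ((S + c) / 2) = (S + c) / 2) by (apply sqrt_sqrt; lra).
  assert (Hy : sqrt ((S - c) / 2) * sqrt ((S - c) / 2) = (S - c) / 2) by (apply sqrt_sqrt; lra).
  assert (Hxy : sqrt ((S + c) / 2) * sqrt ((S - c) / 2) = Rabs t / 2).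
  { rewrite <- sqrt_mult by lra.
    replace ((S + c) / 2 * ((S - c) / 2)) with ((Rabs t / 2) * (Rabs t / 2))
      by (pose proof (pow2_abs t); nra).
    apply sqrt_square. pose proof (Rabs_pos t). lra. }
  destruct (Rlt_dec t 0) as [Ht | Ht];
    [rewrite Rabs_left in Hxy by lra | rewrite Rabs_right in Hxy by lra];
    f_equal; nra.
Qed.

Lemma Re_Csqrt_p_ge0 (w : C) : 0 <= Re (Csqrt_p w).
Proof. apply sqrt_pos. Qed.

Lemma Im_Csqrt_p_ge0 (w : C) : 0 <= Im w -> 0 <= Im (Csqrt_p w).
Proof.
  intros Hw. unfold Csqrt_p, Im; simpl.
  destruct (Rlt_dec (snd w) 0) as [Hlt | _]; [unfold Im in Hw; lra |].
  rewrite Rmult_1_l. apply sqrt_pos.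
Qed.

Lemma quadrant_sqrt_order (x1 y1 x2 y2 : R) :
  0 <= x1 -> 0 <= y1 -> 0 <= x2 -> 0 <= y2 ->
  x1 * y1 = x2 * y2 -> x1 ^ 2 - y1 ^ 2 <= x2 ^ 2 - y2 ^ 2 ->
  x1 <= x2 /\ y2 <= y1.
Proof.
  intros Hx1 Hy1 Hx2 Hy2 Hprod Hre.
  assert (Hx : x1 <= x2).
  { destruct (Rle_lt_dec x1 x2) as [|Hlt]; [assumption|].
    assert (y1 <= y2) by nra. nra. }
  split; [exact Hx|].
  destruct (Rle_lt_dec y2 y1) as [|Hlt]; [assumption|].
  assert (x2 <= x1) by nra. nra.
Qed.

Lemma sqrt_z2m4_sqr (z : C) :
  Cmult (sqrt_z2m4 z) (sqrt_z2m4 z) = Cminus (Cmult z z) (RtoC 4).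
Proof.
  unfold sqrt_z2m4.
  set (p := Csqrt_p (Cminus z (RtoC 2))). set (q := Csqrt_p (Cplus z (RtoC 2))).
  transitivity (Cmult (Cmult p p) (Cmult q q)); [ring|].
  unfold p, q. rewrite !Csqrt_p_sqr. ring.
Qed.

(* With p = sqrt(z-2), q = sqrt(z+2) in the closed first quadrant,
   Im (p q) - Im z = (Re q - Re p) (Im p - Im q) >= 0 by [quadrant_sqrt_order]. *)
Lemma Im_le_Im_sqrt_z2m4 (z : C) : 0 <= Im z -> Im z <= Im (sqrt_z2m4 z).
Proof.
  intros Hz. unfold sqrt_z2m4.
  set (zm := Cminus z (RtoC 2)). set (zp := Cplus z (RtoC 2)).
  assert (Hzm : Im zm = Im z) by (unfold zm, Im; simpl; ring).
  assert (Hzp : Im zp = Im z) by (unfold zp, Im; simpl; ring).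
  assert (Hre : Re zm <= Re zp) by (unfold zm, zp, Re; simpl; lra).
  pose proof (Csqrt_p_sqr zm) as Hp. pose proof (Csqrt_p_sqr zp) as Hq.
  pose proof (Re_Csqrt_p_ge0 zm) as Hx1. pose proof (Re_Csqrt_p_ge0 zp) as Hx2.
  pose proof (Im_Csqrt_p_ge0 zm ltac:(lra)) as Hy1.
  pose proof (Im_Csqrt_p_ge0 zp ltac:(lra)) as Hy2.
  destruct (Csqrt_p zm) as [x1 y1], (Csqrt_p zp) as [x2 y2].
  rewrite <- Hp, <- Hq in Hre. rewrite <- Hp in Hzm. rewrite <- Hq in Hzp.
  unfold Cmult, Re, Im in *; simpl in *.
  destruct (quadrant_sqrt_order x1 y1 x2 y2) as [Hx Hy]; nra.
Qed.

Definition m_sc_other (z : C) : C :=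
  Cdiv (Cminus (Copp z) (sqrt_z2m4 z)) (RtoC 2).

Lemma quadratic_factor (z u : C) :
  Cplus (Cplus (Cmult u u) (Cmult u z)) (RtoC 1)
  = Cmult (Cminus u (m_sc z)) (Cminus u (m_sc_other z)).
Proof.
  unfold m_sc, m_sc_other. pose proof (sqrt_z2m4_sqr z) as Hw.
  set (w := sqrt_z2m4 z) in *.
  transitivity (Cplus (Cplus (Cmult u u) (Cmult u z))
                  (Cdiv (Cminus (Cmult z z) (Cmult w w)) (RtoC 4))).
  - rewrite Hw. field.
  - field.
Qed.

Lemma m_sc_sub_m_sc_other (z : C) : Cminus (m_sc z) (m_sc_other z) = sqrt_z2m4 z.
Proof. unfold m_sc, m_sc_other. field. Qed.

Lemma Im_m_sc_other_le (z : C) : 0 <= Im z -> Im (m_sc_other z) <= - Im z.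
Proof.
  intros Hz. pose proof (Im_le_Im_sqrt_z2m4 z Hz).
  unfold m_sc_other, Cdiv, Cinv, Cmult, Cminus, Copp, Cplus, RtoC, Im in *; simpl in *.
  lra.
Qed.

Lemma Rabs_Im_le_Cmod (z : C) : Rabs (Im z) <= Cmod z.
Proof. eapply Rle_trans; [apply Rmax_r | apply Rmax_Cmod]. Qed.

Lemma Cmod_sqrt_z2m4 (z : C) :
  Cmod (sqrt_z2m4 z) = sqrt (Cmod (Cminus (Cmult z z) (RtoC 4))).
Proof.
  rewrite <- sqrt_z2m4_sqr, Cmod_mult, sqrt_square; [reflexivity | apply Cmod_ge_0].
Qed.

Lemma Cmod_sqr_le_Cmod_sqrt_z2m4_sqr (z : C) :
  Cmod z ^ 2 <= Cmod (sqrt_z2m4 z) ^ 2 + 4.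
Proof.
  assert (H4 : Cmod (RtoC 4) = 4) by (rewrite Cmod_R, Rabs_right; lra).
  replace (Cmod z ^ 2) with (Cmod (Cmult z z)) by (rewrite Cmod_mult; ring).
  replace (Cmod (sqrt_z2m4 z) ^ 2) with (Cmod (Cminus (Cmult z z) (RtoC 4)))
    by (rewrite <- sqrt_z2m4_sqr, Cmod_mult; ring).
  pose proof (Cmod_triangle (Cminus (Cmult z z) (RtoC 4)) (RtoC 4)) as Htri.
  replace (Cplus (Cminus (Cmult z z) (RtoC 4)) (RtoC 4)) with (Cmult z z) in Htri by ring.
  lra.
Qed.

(* a, b: distances from a point to the two roots; D = |m - m'| = sqrt |z^2 - 4|; rho = |z|. *)
Definition root_config (a b D rho r : R) : Prop :=
  0 <= a /\ 0 <= b /\ 0 < D /\ 0 <= rho /\ 0 <= r <= 1 /\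
  D <= a + b /\ a <= b + D /\ a * b <= (1 + rho) * r /\ rho ^ 2 <= D ^ 2 + 4.

Lemma root_config_at (z u : C) (r : R) :
  0 < Im z -> 0 <= r <= 1 ->
  Cmod (Cplus (Cplus (Cmult u u) (Cmult u z)) (RtoC 1)) <= (1 + Cmod z) * r ->
  root_config (Cmod (Cminus u (m_sc z))) (Cmod (Cminus u (m_sc_other z)))
              (Cmod (sqrt_z2m4 z)) (Cmod z) r.
Proof.
  intros Hz Hr HR.
  pose proof (m_sc_sub_m_sc_other z) as Hw.
  pose proof (Im_le_Im_sqrt_z2m4 z (Rlt_le _ _ Hz)) as Hwz.
  set (w := sqrt_z2m4 z) in *.
  assert (HD : 0 < Cmod w)
    by (pose proof (Rabs_Im_le_Cmod w); pose proof (Rle_abs (Im w)); lra).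
  repeat split; try apply Cmod_ge_0; try lra.
  - replace w with (Cplus (Cminus u (m_sc_other z)) (Copp (Cminus u (m_sc z))))
      by (rewrite <- Hw; ring).
    rewrite <- (Cmod_opp (Cminus u (m_sc z))), Rplus_comm. apply Cmod_triangle.
  - replace (Cminus u (m_sc z)) with (Cplus (Cminus u (m_sc_other z)) (Copp w))
      by (rewrite <- Hw; ring).
    rewrite <- (Cmod_opp w). apply Cmod_triangle.
  - rewrite <- Cmod_mult, <- quadratic_factor. exact HR.
  - apply Cmod_sqr_le_Cmod_sqrt_z2m4_sqr.
Qed.

Lemma Im_lt_Cmod_sub_m_sc_other (z u : C) :
  0 <= Im z -> 0 < Im u -> Im z < Cmod (Cminus u (m_sc_other z)).
Proof.
  intros Hz Hu. pose proof (Im_m_sc_other_le z Hz).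
  pose proof (Rabs_Im_le_Cmod (Cminus u (m_sc_other z))) as Hmod.
  pose proof (Rle_abs (Im (Cminus u (m_sc_other z)))).
  unfold Cminus, Cplus, Copp, Im in *; simpl in *. lra.
Qed.

Lemma le_60_Rmin (a D r : R) :
  0 <= a -> 0 < D -> 0 <= r ->
  a * D <= 60 * (D + 1) * r -> a * a <= 3600 * r ->
  a <= 60 * Rmin ((1 + / D) * r) (sqrt r).
Proof.
  intros Ha HD Hr Hlin Hsqr.
  rewrite Rmult_min_distr_l by lra. apply Rmin_glb.
  - apply Rmult_le_reg_r with D; [exact HD|].
    replace (60 * ((1 + / D) * r) * D) with (60 * (D + 1) * r) by (field; lra).
    exact Hlin.
  - rewrite <- (sqrt_square a) by exact Ha.
    replace (60 * sqrt r) with (sqrt (3600 * r)).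
    + apply sqrt_le_1; nra.
    + rewrite sqrt_mult by lra. replace 3600 with (60 * 60) by ring.
      rewrite sqrt_square; lra.
Qed.

Lemma root_config_near (a b D rho r : R) :
  root_config a b D rho r -> a <= b -> a <= 60 * Rmin ((1 + / D) * r) (sqrt r).
Proof.
  intros (Ha & Hb & HD & Hrho & Hr & Hsum & _ & Hprod & Hz) Hab.
  assert (Hrho_D : rho <= D + 2) by nra.
  assert (Hlin : a * D <= 6 * (D + 1) * r) by nra.
  apply le_60_Rmin; [lra | lra | lra | nra |].
  destruct (Rle_lt_dec 1 D).
  - assert (a <= 12 * r) by (apply Rmult_le_reg_r with D; nra). nra.
  - nra.
Qed.

Lemma root_config_top (a b D rho r : R) : root_config a b D rho r -> 3 < b -> a <= b.
Proof.
  intros (Ha & Hb & HD & Hrho & Hr & Hsum & _ & Hprod & Hz) Hb3.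
  destruct (Rle_lt_dec a b) as [|Hba]; [assumption | exfalso].
  assert (Hbig : 9 < 1 + rho) by nra.
  assert (HD3 : 3 * D <= 2 * (1 + rho)) by nra.
  nra.
Qed.

Lemma root_config_crossing (a D rho r : R) :
  root_config a a D rho r -> rho <= 6 /\ D ^ 2 <= 28 * r.
Proof.
  intros (Ha & _ & HD & Hrho & Hr & Hsum & _ & Hprod & Hz).
  assert (HD2 : D ^ 2 <= 4 * (1 + rho) * r) by nra.
  assert (rho <= 6) by nra.
  split; nra.
Qed.

Lemma root_config_far (a b D rho r : R) :
  root_config a b D rho r -> b < a -> rho <= 6 -> D ^ 2 <= 28 * r ->
  a <= 60 * Rmin ((1 + / D) * r) (sqrt r).
Proof.
  intros (Ha & Hb & HD & Hrho & Hr & _ & Hdiff & Hprod & _) Hba Hrho6 HD2.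
  assert (Hb2 : b * b <= 7 * r) by nra.
  assert (Ha2 : a * a <= 70 * r) by nra.
  assert (HaD : a * D <= 60 * r).
  { assert ((a * D) * (a * D) <= (60 * r) * (60 * r)) by nra. nra. }
  apply le_60_Rmin; nra.
Qed.

Lemma Cmod_line_le (E t1 t2 : R) : 0 <= t1 <= t2 -> Cmod (E, t1) <= Cmod (E, t2).
Proof. intros Ht. unfold Cmod; simpl. apply sqrt_le_1; nra. Qed.

Lemma Cmod_sqrt_z2m4_line_le (E t1 t2 : R) :
  0 <= t1 <= t2 -> Cmod (sqrt_z2m4 (E, t1)) <= Cmod (sqrt_z2m4 (E, t2)).
Proof.
  intros Ht.
  assert (Hfactor : forall t, Cminus (Cmult (E, t) (E, t)) (RtoC 4) = Cmult (E - 2, t) (E + 2, t))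
    by (intros t; unfold Cminus, Cmult, Cplus, Copp, RtoC; simpl; f_equal; ring).
  rewrite !Cmod_sqrt_z2m4, !Hfactor, !Cmod_mult.
  apply sqrt_le_1; try (apply Rmult_le_pos; apply Cmod_ge_0).
  apply Rmult_le_compat; try apply Cmod_ge_0; apply Cmod_line_le; exact Ht.
Qed.

Definition continuity_pt_C (f : R -> C) (t0 : R) : Prop :=
  continuity_pt (fun t => Re (f t)) t0 /\ continuity_pt (fun t => Im (f t)) t0.

Ltac continuity_pt_arith :=
  repeat first
    [ assumption
    | apply continuity_pt_plus | apply continuity_pt_minus | apply continuity_pt_mult
    | apply continuity_pt_opp | apply continuity_pt_id
    | apply continuity_pt_const; intros ? ?; reflexivity
    | apply (continuity_pt_comp _ sqrt); [| apply continuity_pt_filterlim, continuous_sqrt] ].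

Lemma continuity_pt_C_const (c : C) (t0 : R) : continuity_pt_C (fun _ => c) t0.
Proof. split; continuity_pt_arith. Qed.

Lemma continuity_pt_C_line (E t0 : R) : continuity_pt_C (fun t => (E, t)) t0.
Proof. split; continuity_pt_arith. Qed.

Lemma continuity_pt_C_plus (f g : R -> C) (t0 : R) :
  continuity_pt_C f t0 -> continuity_pt_C g t0 ->
  continuity_pt_C (fun t => Cplus (f t) (g t)) t0.
Proof. intros [] []. split; continuity_pt_arith. Qed.

Lemma continuity_pt_C_minus (f g : R -> C) (t0 : R) :
  continuity_pt_C f t0 -> continuity_pt_C g t0 ->
  continuity_pt_C (fun t => Cminus (f t) (g t)) t0.
Proof. intros [] []. split; continuity_pt_arith. Qed.

Lemma continuity_pt_C_opp (f : R -> C) (t0 : R) :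
  continuity_pt_C f t0 -> continuity_pt_C (fun t => Copp (f t)) t0.
Proof. intros []. split; continuity_pt_arith. Qed.

Lemma continuity_pt_C_mult (f g : R -> C) (t0 : R) :
  continuity_pt_C f t0 -> continuity_pt_C g t0 ->
  continuity_pt_C (fun t => Cmult (f t) (g t)) t0.
Proof. intros [] []. split; continuity_pt_arith. Qed.

Lemma continuity_pt_Cmod (f : R -> C) (t0 : R) :
  continuity_pt_C f t0 -> continuity_pt (fun t => Cmod (f t)) t0.
Proof. intros []. unfold Cmod; simpl. continuity_pt_arith. Qed.

Lemma continuity_pt_C_Csqrt_p (f : R -> C) (t0 : R) :
  continuity_pt_C f t0 -> 0 < Im (f t0) -> continuity_pt_C (fun t => Csqrt_p (f t)) t0.
Proof.
  intros Hf Hpos. pose proof (continuity_pt_Cmod f t0 Hf) as Hmod.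
  destruct Hf as [HRe HIm].
  assert (Hupper : locally t0 (fun t => 0 < Im (f t))).
  { apply continuity_pt_filterlim in HIm. apply HIm. exact (open_gt 0 _ Hpos). }
  split.
  - unfold Csqrt_p, Re at 1; simpl. continuity_pt_arith.
  - (* Near t0 the sign in the imaginary part of [Csqrt_p] is constantly 1. *)
    apply continuity_pt_ext_loc with (fun t => sqrt ((Cmod (f t) - Re (f t)) / 2)).
    + apply (filter_imp (fun t => 0 < Im (f t))); [|exact Hupper].
      intros t Ht. unfold Csqrt_p; simpl.
      destruct (Rlt_dec (Im (f t)) 0) as [Hneg|_]; [lra | ring].
    + continuity_pt_arith.
Qed.

Lemma continuity_pt_C_sqrt_z2m4_line (E t0 : R) :
  0 < t0 -> continuity_pt_C (fun t => sqrt_z2m4 (E, t)) t0.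
Proof.
  intros Ht0. unfold sqrt_z2m4.
  apply continuity_pt_C_mult; apply continuity_pt_C_Csqrt_p;
    [apply continuity_pt_C_minus | | apply continuity_pt_C_plus | ];
    try apply continuity_pt_C_line; try apply continuity_pt_C_const;
    unfold Cminus, Cplus, Copp, RtoC, Im; simpl; lra.
Qed.

Lemma continuity_pt_C_m_sc_line (E t0 : R) :
  0 < t0 -> continuity_pt_C (fun t => m_sc (E, t)) t0.
Proof.
  intros Ht0. unfold m_sc, Cdiv.
  apply continuity_pt_C_mult; [|apply continuity_pt_C_const].
  apply continuity_pt_C_plus;
    [apply continuity_pt_C_opp, continuity_pt_C_line | apply continuity_pt_C_sqrt_z2m4_line, Ht0].
Qed.

Lemma continuity_pt_C_m_sc_other_line (E t0 : R) :
  0 < t0 -> continuity_pt_C (fun t => m_sc_other (E, t)) t0.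
Proof.
  intros Ht0. unfold m_sc_other, Cdiv.
  apply continuity_pt_C_mult; [|apply continuity_pt_C_const].
  apply continuity_pt_C_minus;
    [apply continuity_pt_C_opp, continuity_pt_C_line | apply continuity_pt_C_sqrt_z2m4_line, Ht0].
Qed.

Lemma continuity_pt_C_of_continuous (f : R -> C) (t0 : R) :
  continuous f t0 -> continuity_pt_C f t0.
Proof.
  intros Hf. split; apply continuity_pt_filterlim.
  - apply (continuous_comp f fst); [exact Hf|]. destruct (f t0). apply continuous_fst.
  - apply (continuous_comp f snd); [exact Hf|]. destruct (f t0). apply continuous_snd.
Qed.

Lemma continuous_upper_half_plane_line (s : C -> C) (E t0 : R) :
  0 < t0 ->
  filterlim s (within (fun w : C => 0 < Im w) (locally (E, t0))) (locally (s (E, t0))) ->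
  continuous (fun t => s (E, t)) t0.
Proof.
  intros Ht0 Hs P HP. destruct (Hs P HP) as [eps Heps].
  assert (Hdelta : 0 < Rmin eps t0) by (apply Rmin_pos; [apply cond_pos | exact Ht0]).
  exists (mkposreal _ Hdelta). intros t Ht.
  assert (Hclose : Rabs (t - t0) < Rmin eps t0) by exact Ht.
  apply Rabs_def2 in Hclose. pose proof (Rmin_l eps t0). pose proof (Rmin_r eps t0).
  apply Heps.
  - split; [apply ball_center |]. change (Rabs (t - t0) < eps). apply Rabs_def1; lra.
  - unfold Im; simpl. lra.
Qed.

Lemma IVT_le (f : R -> R) (a b : R) :
  a <= b -> (forall x, a <= x <= b -> continuity_pt f x) ->
  f a <= 0 -> 0 <= f b -> exists c, a <= c <= b /\ f c = 0.
Proof.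
  intros Hab Hf Ha Hb.
  destruct (Req_dec (f a) 0) as [Ha0|Ha0]; [exists a; split; [lra | exact Ha0]|].
  destruct (Req_dec (f b) 0) as [Hb0|Hb0]; [exists b; split; [lra | exact Hb0]|].
  assert (Hlt : a < b) by (destruct (Req_dec a b) as [->|]; lra).
  destruct (Ranalysis5.IVT_interv f a b Hf Hlt ltac:(lra) ltac:(lra)) as [c Hc].
  exists c. exact Hc.
Qed.

Section Vertical_line.

Variables (s : C -> C) (E eta0 eta1 : R) (r : R -> R).

Hypothesis s_upper : forall z : C, 0 < Im z -> 0 < Im (s z).
Hypothesis s_continuous : forall z : C, 0 < Im z ->
  filterlim s (within (fun w : C => 0 < Im w) (locally z)) (locally (s z)).
Hypothesis eta0_pos : 0 < eta0.
Hypothesis eta1_ge : Rmax 3 eta0 <= eta1.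
Hypothesis r_range : forall eta, eta0 <= eta <= eta1 -> 0 <= r eta <= 1.
Hypothesis r_nonincreasing : forall x y, eta0 <= x -> x <= y -> y <= eta1 -> r y <= r x.
Hypothesis self_consistent : forall eta, eta0 <= eta <= eta1 ->
  Cmod (Cplus (Cplus (Cmult (s (E, eta)) (s (E, eta))) (Cmult (s (E, eta)) (E, eta))) (RtoC 1))
  <= (1 + Cmod (E, eta)) * r eta.

Definition dist_m (t : R) : R := Cmod (Cminus (s (E, t)) (m_sc (E, t))).
Definition dist_m_other (t : R) : R := Cmod (Cminus (s (E, t)) (m_sc_other (E, t))).

Lemma root_config_line (t : R) : eta0 <= t <= eta1 ->
  root_config (dist_m t) (dist_m_other t) (Cmod (sqrt_z2m4 (E, t))) (Cmod (E, t)) (r t).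
Proof.
  intros Ht. apply root_config_at; [simpl; lra | apply r_range, Ht | apply self_consistent, Ht].
Qed.

Lemma dist_m_le_other_top : dist_m eta1 <= dist_m_other eta1.
Proof.
  pose proof (Rmax_l 3 eta0). pose proof (Rmax_r 3 eta0).
  apply (root_config_top _ _ _ _ _ (root_config_line eta1 ltac:(lra))).
  apply Rle_lt_trans with eta1; [lra|].
  apply (Im_lt_Cmod_sub_m_sc_other (E, eta1)); [simpl; lra | apply s_upper; simpl; lra].
Qed.

Lemma continuity_pt_dist_gap (t : R) : 0 < t ->
  continuity_pt (fun t => dist_m_other t - dist_m t) t.
Proof.
  intros Ht. assert (Hs : continuity_pt_C (fun t => s (E, t)) t).
  { apply continuity_pt_C_of_continuous, continuous_upper_half_plane_line; [exact Ht|].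
    apply s_continuous. simpl. exact Ht. }
  apply continuity_pt_minus; apply continuity_pt_Cmod, continuity_pt_C_minus; try exact Hs.
  - apply continuity_pt_C_m_sc_other_line, Ht.
  - apply continuity_pt_C_m_sc_line, Ht.
Qed.

Lemma dist_crossing_exists (eta : R) : eta0 <= eta <= eta1 ->
  dist_m_other eta < dist_m eta -> exists ts, eta <= ts <= eta1 /\ dist_m ts = dist_m_other ts.
Proof.
  intros Heta Hfar. pose proof dist_m_le_other_top.
  destruct (IVT_le (fun t => dist_m_other t - dist_m t) eta eta1) as [ts [Hts Hzero]];
    try lra.
  - intros t Ht. apply continuity_pt_dist_gap. lra.
  - exists ts. split; [exact Hts | lra].
Qed.

Lemma dist_crossing_controls (eta ts : R) : eta0 <= eta -> eta <= ts <= eta1 ->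
  dist_m ts = dist_m_other ts ->
  Cmod (E, eta) <= 6 /\ Cmod (sqrt_z2m4 (E, eta)) ^ 2 <= 28 * r eta.
Proof.
  intros Heta Hts Hcross.
  pose proof (root_config_line ts ltac:(lra)) as Hconf. rewrite <- Hcross in Hconf.
  destruct (root_config_crossing _ _ _ _ Hconf) as [Hrho HD].
  pose proof (Cmod_line_le E eta ts ltac:(lra)).
  pose proof (Cmod_sqrt_z2m4_line_le E eta ts ltac:(lra)).
  pose proof (r_nonincreasing eta ts Heta (proj1 Hts) (proj2 Hts)).
  split; [lra|].
  apply Rle_trans with (Cmod (sqrt_z2m4 (E, ts)) ^ 2); [|lra].
  apply pow_incr. split; [apply Cmod_ge_0 | assumption].
Qed.

Lemma dist_m_bound (eta : R) : eta0 <= eta <= eta1 ->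
  dist_m eta <= 60 * Rmin ((1 + / Cmod (sqrt_z2m4 (E, eta))) * r eta) (sqrt (r eta)).
Proof.
  intros Heta. pose proof (root_config_line eta Heta) as Hconf.
  destruct (Rle_lt_dec (dist_m eta) (dist_m_other eta)) as [Hnear | Hfar].
  - exact (root_config_near _ _ _ _ _ Hconf Hnear).
  - destruct (dist_crossing_exists eta Heta Hfar) as [ts [Hts Hcross]].
    destruct (dist_crossing_controls eta ts (proj1 Heta) Hts Hcross) as [Hrho HD].
    exact (root_config_far _ _ _ _ _ Hconf Hfar Hrho HD).
Qed.

End Vertical_line.

Theorem lemma5p6 :
  exists K : R, 0 < K /\
  forall (s : C -> C) (E eta0 eta1 : R) (r : R -> R),
    (* s maps C_+ into C_+ and is continuous on C_+ *)
    (forall z : C, 0 < Im z -> 0 < Im (s z)) ->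
    (forall z : C, 0 < Im z ->
       filterlim s (within (fun w : C => 0 < Im w) (locally z)) (locally (s z))) ->
    0 < eta0 ->
    Rmax 3 eta0 <= eta1 ->
    (* r : [eta0, eta1] -> [0, 1], nonincreasing, continuous *)
    (forall eta, eta0 <= eta <= eta1 -> 0 <= r eta <= 1) ->
    (forall x y, eta0 <= x -> x <= y -> y <= eta1 -> r y <= r x) ->
    (forall eta, eta0 <= eta <= eta1 ->
       filterlim r (within (fun x => eta0 <= x <= eta1) (locally eta))
                   (locally (r eta))) ->
    (forall eta, eta0 <= eta <= eta1 ->
       Cmod (Cplus (Cplus (Cmult (s (E, eta)) (s (E, eta)))
                          (Cmult (s (E, eta)) (E, eta))) (RtoC 1))
       <= (1 + Cmod (E, eta)) * r eta) ->
    forall eta, eta0 <= eta <= eta1 ->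
      Cmod (Cminus (s (E, eta)) (m_sc (E, eta))) <= K * F_z (E, eta) (r eta).
Proof.
  exists 60. split; [lra|].
  intros s E eta0 eta1 r Hs_upper Hs_cont Heta0 Heta1 Hr_range Hr_mono _ Hself eta Heta.
  unfold F_z. rewrite <- Cmod_sqrt_z2m4.
  exact (dist_m_bound s E eta0 eta1 r Hs_upper Hs_cont Heta0 Heta1 Hr_range Hr_mono Hself
           eta Heta).
Qed.
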